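(* Let $\beta_t>0$ for $t\in[0,1]$, set the base drift $f:=0$, and consider the Schr\''odinger bridge $\mathrm{d}X_t=\beta_t\nabla\log\Psi(X_t,t)\mathrm{d}t+\sqrt{\beta_t}\mathrm{d}W_t$ (equivalently $\mathrm{d}X_t=-\beta_t\nabla\log\widehat\Psi(X_t,t)\mathrm{d}t+\sqrt{\beta_t}\mathrm{d}\overline W_t$) between boundary distributions at $t=0$ and $t=1$. Define $\sigma_t^2:=\int_0^t\beta_\tau\,\mathrm{d}\tau$ and $\bar\sigma_t^2:=\int_t^1\beta_\tau\,\mathrm{d}\tau$. Then the posterior of $X_t$ given the boundary pair $(X_0,X_1)$ is $$q(X_t\mid X_0,X_1)=\mathcal N\big(X_t;\mu_t(X_0,X_1),\Sigma_t\big),\quad \mu_t=\frac{\bar\sigma_t^2}{\bar\sigma_t^2+\sigma_t^2}X_0+\frac{\sigma_t^2}{\bar\sigma_t^2+\sigma_t^2}X_1,\quad \Sigma_t=\frac{\sigma_t^2\bar\sigma_t^2}{\bar\sigma_t^2+\sigma_t^2}I.$$ Moreover, for a time discretization $0=t_0<\dots<t_N=1$ with $X_n:=X_{t_n}$, let $p(X_n\mid X_0,X_{n+1})$ denote the DDPM posterior, i.e. the conditional density of $X_{t_n}$ given $X_0$ and $X_{t_{n+1}}$ under the process $\mathrm{d}X_t=\sqrt{\beta_t}\,\mathrm{d}W_t$ started at $X_0$. Then for every $0\le n\le N-1$, $$q(X_n\mid X_0,X_N)=\int\prod_{k=n}^{N-1}p(X_k\mid X_0,X_{k+1})\,\mathr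m{d}X_{n+1}\cdots\mathrm{d}X_{N-1}.$$
   Context: $W_t$ is a standard $d$-dimensional Wiener process, $\overline W_t$ its reversed-time counterpart, and $\Psi,\widehat\Psi$ are the Schr\''odinger bridge potentials, solving $\partial_t\Psi=-\tfrac12\beta_t\Delta\Psi$, $\partial_t\widehat\Psi=\tfrac12\beta_t\Delta\widehat\Psi$ (the system with $f=0$) with $\Psi(\cdot,0)\widehat\Psi(\cdot,0)$ and $\Psi(\cdot,1)\widehat\Psi(\cdot,1)$ equal to the boundary densities at $t=0$ and $t=1$. $I$ is the $d\times d$ identity. Explicitly, with $\alpha_n^2:=\int_{t_n}^{t_{n+1}}\beta_\tau\mathrm{d}\tau$, $p(X_n\mid X_0,X_{n+1})=\mathcal N\big(X_n;\frac{\alpha_n^2}{\alpha_n^2+\sigma_{t_n}^2}X_0+\frac{\sigma_{t_n}^2}{\alpha_n^2+\sigma_{t_n}^2}X_{n+1},\frac{\sigma_{t_n}^2\alpha_n^2}{\alpha_n^2+\sigma_{t_n}^2}I\big)$. *)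

From HB Require Import structures.
From mathcomp Require Import all_boot all_order all_algebra.
From mathcomp Require Import all_classical all_reals all_analysis.
Set Implicit Arguments. Unset Strict Implicit. Unset Printing Implicit Defensive.
Import Order.TTheory GRing.Theory Num.Theory.
Import numFieldNormedType.Exports.
Local Open Scope classical_set_scope.
Local Open Scope ring_scope.

Section Defs.
Variable R : realType.

(* Lebesgue integral over R^d (points are row vectors 'rV[R]_d), defined as
   the iterated one-dimensional Lebesgue integral over the coordinates. *)
Fixpoint intRd (d : nat) : ('rV[R]_d -> \bar R) -> \bar R :=
  match d with
  | 0 => fun F => F 0
  | d'.+1 => fun F =>
      (\int[@lebesgue_measure R]_(x in [set: R])
         intRd (fun v : 'rV[R]_d' => F (row_mx (const_mx x : 'rV[R]_1) v)))%E
  end.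

Definition sqnorm (d : nat) (v : 'rV[R]_d) : R := \sum_(i < d) (v 0 i) ^+ 2.

Definition gauss (d : nat) (m : 'rV[R]_d) (v : R) (x : 'rV[R]_d) : R :=
  (Num.sqrt (2 * pi * v)) ^- d * expR (- sqnorm (x - m) / (2 * v)).

Definition sig2 (beta : R -> R) (s t : R) : R :=
  fine (\int[@lebesgue_measure R]_(x in `[s, t]) (beta x)%:E)%E.

(* transition density of the reference process dX = sqrt(beta) dW, from (x,s) to (y,t) *)
Definition refK (d : nat) (beta : R -> R) (s t : R) (x y : 'rV[R]_d) : R :=
  gauss x (sig2 beta s t) y.

(* transition density of the Schroedinger bridge dX = beta grad log Psi dt + sqrt(beta) dW
   (Doob h-transform of the reference process by Psi) *)
Definition sbK (d : nat) (beta : R -> R) (Psi : 'rV[R]_d -> R -> R)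
  (s t : R) (x y : 'rV[R]_d) : R :=
  refK beta s t x y * Psi y t / Psi x s.

(* joint density of (X_0, X_t, X_1) under the bridge, initial density Psi(.,0) Psihat(.,0) *)
Definition sb_joint (d : nat) (beta : R -> R) (Psi Psihat : 'rV[R]_d -> R -> R)
  (t : R) (x0 xt x1 : 'rV[R]_d) : R :=
  Psi x0 0 * Psihat x0 0 * sbK beta Psi 0 t x0 xt * sbK beta Psi t 1 xt x1.

Definition sb_post (d : nat) (beta : R -> R) (Psi Psihat : 'rV[R]_d -> R -> R)
  (t : R) (x0 x1 xt : 'rV[R]_d) : R :=
  sb_joint beta Psi Psihat t x0 xt x1 /
  fine (intRd (fun y => (sb_joint beta Psi Psihat t x0 y x1)%:E)).

Definition ddpm_post (d : nat) (beta : R -> R) (tg : nat -> R) (n : nat)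
  (x0 y xn : 'rV[R]_d) : R :=
  refK beta 0 (tg n) x0 xn * refK beta (tg n) (tg n.+1) xn y /
  refK beta 0 (tg n.+1) x0 y.

(* chain j n x0 xN xn = int prod_{k=n}^{n+j} p(X_k | X_0, X_{k+1}) dX_{n+1} ... dX_{n+j},
   with X_{n+j+1} := xN, written as iterated integral (Tonelli) *)
Fixpoint chain (d : nat) (beta : R -> R) (tg : nat -> R) (j n : nat)
  (x0 xN xn : 'rV[R]_d) : \bar R :=
  match j with
  | 0 => (ddpm_post beta tg n x0 xN xn)%:E
  | j'.+1 => intRd (fun y => (ddpm_post beta tg n x0 y xn)%:E
                              * chain beta tg j' n.+1 x0 xN y)%E
  end.

End Defs.

(* The bridge is the Doob h-transform of the reference process [dX = sqrt(beta) dW] by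
   [Psi], so in the joint density of [(X_0, X_t, X_1)] the factors of [Psi] at the
   intermediate time cancel: conditioned on both endpoints, the bridge is the pinned
   reference process and the potentials drop out. Completing the square in a product of
   two Gaussian kernels gives both the Chapman-Kolmogorov identity and the Gaussian form of
   the pinned density. The DDPM chain telescopes by the same identity: integrating
   [p(X_k | X_0, X_(k+1))] against the density of [X_(k+1)] pinned at [(0, X_0)] and
   [(t_N, X_N)] over [X_(k+1)] gives the density of [X_k] pinned at the same points. *)

From HB Require Import structures.
From mathcomp Require Import all_boot all_order all_algebra.
From mathcomp Require Import all_classical all_reals all_analysis.
From mathcomp Require Import ring lra zify measurable_realfun.
Set Implicit Arguments. Unset Strict Implicit. Unset Printing Implicit Defensive.
Import Order.TTheory GRing.Theory Num.Theory.
Import numFieldNormedType.Exports.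
Local Open Scope classical_set_scope.
Local Open Scope ring_scope.

Section Gaussian.
Variable R : realType.
Implicit Types (u v c : R).

Lemma gauss_gt0 d (m x : 'rV[R]_d) v : 0 < v -> 0 < gauss m v x.
Proof.
move=> v0; rewrite /gauss mulr_gt0 ?expR_gt0 // invr_gt0 exprn_gt0 // sqrtr_gt0.
by rewrite !mulr_gt0 ?pi_gt0.
Qed.

(* Completing the square in [x]. *)
Lemma gauss_mul d (a b x : 'rV[R]_d) u v : 0 < u -> 0 < v ->
  gauss a u x * gauss x v b =
  gauss a (u + v) b * gauss ((v / (u + v)) *: a + (u / (u + v)) *: b) (u * v / (u + v)) x.
Proof.
move=> u0 v0; have uv0 : 0 < u + v by lra.
rewrite /gauss mulrACA [RHS]mulrACA -!expRD; congr (_ * expR _).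
  have pi0 := pi_gt0 R.
  rewrite -!exprVn -!exprMn -!invfM -!sqrtrM ?mulr_ge0 ?ltW //.
  by congr ((Num.sqrt _)^-1 ^+ _); field; rewrite gt_eqF.
rewrite /sqnorm -!sumrN !mulr_suml -!big_split /=.
by apply: eq_bigr => i _; rewrite !mxE; field; lra.
Qed.

Lemma sqnorm_row_mx d (a : 'rV[R]_1) (w : 'rV[R]_d) :
  sqnorm (row_mx a w) = a 0 0 ^+ 2 + sqnorm w.
Proof.
rewrite /sqnorm big_split_ord big_ord1 /= row_mxEl; congr (_ + _).
by apply: eq_bigr => i _; rewrite row_mxEr.
Qed.

Lemma gauss_row_mx d (a : 'rV[R]_1) (m : 'rV[R]_d) v (x : R) (w : 'rV[R]_d) : 0 < v ->
  gauss (row_mx a m) v (row_mx (const_mx x) w) =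
  normal_pdf (a 0 0) (Num.sqrt v) x * gauss m v w.
Proof.
move=> v0; rewrite /gauss /normal_pdf sqrtr_eq0 lt_geF // /normal_peak /normal_fun.
rewrite sqr_sqrtr ?ltW // opp_row_mx add_row_mx sqnorm_row_mx !mxE.
rewrite mulrACA -expRD exprD expr1 invfM; congr (_ * _ * expR _).
- by congr (_^-1); congr Num.sqrt; rewrite -mulr_natr; ring.
- by rewrite -mulr_natr; field; lra.
Qed.

Lemma intRd_gauss d (m : 'rV[R]_d) v c : 0 < v ->
  intRd (fun x => (c * gauss m v x)%:E) = c%:E.
Proof.
move=> v0; elim: d m c => [|d IH] m c.
  by rewrite /= /gauss /sqnorm big_ord0 expr0 invr1 mul1r oppr0 mul0r expR0 mulr1.
have [a [m' ->]] : exists (a : 'rV_1) (m' : 'rV_d), m = row_mx a m'.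
  by exists (lsubmx (m : 'rV_(1 + d))), (rsubmx (m : 'rV_(1 + d))); rewrite hsubmxK.
transitivity (\int[@lebesgue_measure R]_(x in [set: R])
   intRd (fun w => ((c * normal_pdf (a 0 0) (Num.sqrt v) x) * gauss m' v w)%:E))%E.
  apply: eq_integral => x _; congr intRd; apply/funext => w.
  by rewrite gauss_row_mx // mulrA.
under eq_integral do rewrite IH EFinM.
rewrite integralZl //; last exact: integrable_normal_pdf.
by rewrite integral_normal_pdf mule1.
Qed.

Lemma intRd_gauss_mul d (a b : 'rV[R]_d) u v c : 0 < u -> 0 < v ->
  intRd (fun x => (c * (gauss a u x * gauss x v b))%:E) = (c * gauss a (u + v) b)%:E.
Proof.
move=> u0 v0; under eq_fun do rewrite gauss_mul // mulrA.
by rewrite intRd_gauss // divr_gt0 ?mulr_gt0 ?addr_gt0.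
Qed.

End Gaussian.

Section Bridges.
Variables (R : realType) (beta : R -> R).
Hypothesis beta_pos : forall t, 0 <= t <= 1 -> 0 < beta t.
Hypothesis beta_int : (@lebesgue_measure R).-integrable `[0, 1] (EFin \o beta).
Local Notation mu := (@lebesgue_measure R).

Lemma beta_itv_gt0 {s t x : R} : 0 <= s -> t <= 1 -> x \in `[s, t] -> 0 < beta x.
Proof. by move=> s0 t1; rewrite in_itv /= => /andP[sx xt]; apply: beta_pos; lra. Qed.

Lemma beta_integrable_itv {s t : R} : 0 <= s -> t <= 1 -> mu.-integrable `[s, t] (EFin \o beta).
Proof.
move=> s0 t1; apply: integrableS beta_int => // x /=.
by rewrite !in_itv /= => /andP[sx xt]; lra.
Qed.

Lemma sig2_add (s t u : R) : 0 <= s <= t -> t <= u <= 1 ->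
  sig2 beta s t + sig2 beta t u = sig2 beta s u.
Proof.
move=> /andP[s0 st] /andP[tu u1].
have fin s' t' : 0 <= s' -> t' <= 1 -> (\int[mu]_(x in `[s', t']) (beta x)%:E)%E \is a fin_num.
  by move=> s0' t1'; exact: integrable_fin_num _ (beta_integrable_itv s0' t1').
have mf : measurable_fun `[s, u] (EFin \o beta).
  exact: measurable_int (beta_integrable_itv s0 u1).
rewrite /sig2 -fineD ?fin //; [congr fine|lra|lra].
rewrite (@itv_bndbnd_setU _ _ (BLeft s) (BRight t) (BRight u)) ?bnd_simp //.
rewrite integral_setU //=; first last.
- rewrite /disj_set; apply/eqP/seteqP; split => x //= [].
  by rewrite !in_itv /= => /andP[_ xt] /andP[tx _]; lra.
- by rewrite -itv_bndbnd_setU ?bnd_simp.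
congr (_ + _)%E; rewrite integral_itv_obnd_cbnd //.
by apply: measurable_funS mf => //; exact: subset_itvr.
Qed.

(* [beta] need not be bounded below: positivity comes from [beta] not vanishing almost
   everywhere on an interval of positive length. *)
Lemma sig2_gt0 (s t : R) : 0 <= s -> s < t -> t <= 1 -> 0 < sig2 beta s t.
Proof.
move=> s0 st t1.
have ibeta := beta_integrable_itv s0 t1.
have ge0 : (0 <= \int[mu]_(x in `[s, t]) (beta x)%:E)%E.
  by apply: integral_ge0 => x /(beta_itv_gt0 s0 t1)/ltW; rewrite lee_fin.
rewrite /sig2 lt_neqAle fine_ge0 // andbT; apply/negP => /eqP int0.
have {}int0 : (\int[mu]_(x in `[s, t]) `|(beta x)%:E| = 0)%E.
  rewrite -[0%E]/(0%:E) int0 fineK; last exact: integrable_fin_num _ ibeta.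
  apply: eq_integral => x /[!inE] /(beta_itv_gt0 s0 t1) bx.
  by rewrite gee0_abs // lee_fin ltW.
have [Z [mZ Z0 sZ]] := proj1 (ae_eq_integral_abs mu (measurable_itv _) (measurable_int _ ibeta)) int0.
have : mu `[s, t] = 0%E.
  apply: (subset_measure0 _ _ _ Z0) => // x sx; apply: sZ => /= /(_ sx) /eqP.
  by rewrite eqe gt_eqF // (beta_itv_gt0 s0 t1).
by rewrite lebesgue_measure_itv /= lte_fin st -EFinD => /eqP; rewrite eqe; lra.
Qed.

Lemma refK_gt0 d (s t : R) (x y : 'rV[R]_d) : 0 <= s -> s < t -> t <= 1 ->
  0 < refK beta s t x y.
Proof. by move=> s0 st t1; rewrite gauss_gt0 // sig2_gt0. Qed.

Lemma refK_chapman_kolmogorov d (s t u c : R) (x z : 'rV[R]_d) :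
  0 <= s -> s < t -> t < u -> u <= 1 ->
  intRd (fun y => (c * (refK beta s t x y * refK beta t u y z))%:E) = (c * refK beta s u x z)%:E.
Proof.
move=> s0 st tu u1.
have Kst : 0 < sig2 beta s t by apply: sig2_gt0 => //; lra.
have Ktu : 0 < sig2 beta t u by apply: sig2_gt0 => //; lra.
by rewrite /refK intRd_gauss_mul // sig2_add //; apply/andP; split; lra.
Qed.

Definition ref_bridge d (s t u : R) (x z y : 'rV[R]_d) : R :=
  refK beta s t x y * refK beta t u y z / refK beta s u x z.

Lemma ref_bridge_gauss d (s t u : R) (x z y : 'rV[R]_d) : 0 <= s -> s < t -> t < u -> u <= 1 ->
  ref_bridge s t u x z y =
  gauss ((sig2 beta t u / (sig2 beta t u + sig2 beta s t)) *: x +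
         (sig2 beta s t / (sig2 beta t u + sig2 beta s t)) *: z)
        (sig2 beta s t * sig2 beta t u / (sig2 beta t u + sig2 beta s t)) y.
Proof.
move=> s0 st tu u1.
have Kst : 0 < sig2 beta s t by apply: sig2_gt0 => //; lra.
have Ktu : 0 < sig2 beta t u by apply: sig2_gt0 => //; lra.
have Ksu : sig2 beta s t + sig2 beta t u = sig2 beta s u.
  by apply: sig2_add; apply/andP; split; lra.
rewrite /ref_bridge /refK gauss_mul // Ksu mulrAC divff ?mul1r.
  by rewrite [sig2 beta t u + _]addrC Ksu.
by rewrite gt_eqF // gauss_gt0 // -Ksu addr_gt0.
Qed.

Lemma ref_bridge_chain d (s t v u : R) (x z y : 'rV[R]_d) :
  0 <= s <= t -> t < v -> v < u -> u <= 1 ->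
  intRd (fun w => (ref_bridge s t v x w y)%:E * (ref_bridge s v u x z w)%:E)%E =
  (ref_bridge s t u x z y)%:E.
Proof.
move=> /andP[s0 st] tv vu u1.
transitivity (intRd (fun w => (refK beta s t x y / refK beta s u x z *
                               (refK beta t v y w * refK beta v u w z))%:E)).
  congr intRd; apply/funext => w; rewrite -EFinM /ref_bridge; congr EFin.
  have Ksv : refK beta s v x w != 0 by rewrite gt_eqF // refK_gt0 //; lra.
  have Ksu : refK beta s u x z != 0 by rewrite gt_eqF // refK_gt0 //; lra.
  (* Abstracting the kernels keeps [field] from unfolding them. *)
  move: Ksv Ksu.
  move: (refK _ s t x y) (refK _ t v y w) (refK _ s v x w) (refK _ v u w z) (refK _ s u x z).
  by move=> a b c e f c0 f0; field; rewrite c0 f0.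
by rewrite refK_chapman_kolmogorov; [rewrite mulrAC | lra..].
Qed.

Section SchrodingerBridge.
Variables (d : nat) (Psi Psihat : 'rV[R]_d -> R -> R).
Hypothesis Psi_pos : forall x t, 0 <= t <= 1 -> 0 < Psi x t.
Hypothesis Psihat_pos : forall x t, 0 <= t <= 1 -> 0 < Psihat x t.

(* The h-transform factors [Psi y t / Psi x s] telescope along [0 -> t -> 1]. *)
Lemma sb_joint_refK (t : R) (x0 y x1 : 'rV[R]_d) : 0 <= t <= 1 ->
  sb_joint beta Psi Psihat t x0 y x1 =
  Psihat x0 0 * Psi x1 1 * (refK beta 0 t x0 y * refK beta t 1 y x1).
Proof.
move=> t01; have P0 : Psi x0 0 != 0 by rewrite gt_eqF // Psi_pos // lexx ler01.
have Pt : Psi y t != 0 by rewrite gt_eqF // Psi_pos.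
move: P0 Pt; rewrite /sb_joint /sbK.
move: (Psi x0 0) (Psi y t) (refK _ 0 t x0 y) (refK _ t 1 y x1) => a b k l a0 b0.
by field; rewrite a0 b0.
Qed.

Lemma sb_post_ref_bridge (t : R) (x0 x1 xt : 'rV[R]_d) : 0 < t < 1 ->
  sb_post beta Psi Psihat t x0 x1 xt = ref_bridge 0 t 1 x0 x1 xt.
Proof.
move=> /andP[t0 t1]; have t01 : 0 <= t <= 1 by apply/andP; split; lra.
rewrite /sb_post sb_joint_refK //.
under eq_fun do rewrite sb_joint_refK //.
rewrite refK_chapman_kolmogorov //= /ref_bridge.
have c0 : Psihat x0 0 * Psi x1 1 != 0.
  by rewrite mulf_neq0 // gt_eqF ?Psihat_pos ?Psi_pos // lexx ler01.
have K0 : refK beta 0 1 x0 x1 != 0 by rewrite gt_eqF // refK_gt0.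
move: c0 K0; move: (_ * Psi x1 1) (refK _ 0 t x0 xt * _) (refK _ 0 1 x0 x1).
by move=> c k l c0 l0; rewrite -mulf_div divff ?mul1r.
Qed.

End SchrodingerBridge.

Section Grid.
Variables (tg : nat -> R) (N : nat).
Hypotheses (tg0 : tg 0%N = 0) (tgN : tg N = 1).
Hypothesis tg_incr : forall k, (k < N)%N -> tg k < tg k.+1.

Lemma grid_lt k l : (k < l)%N -> (l <= N)%N -> tg k < tg l.
Proof.
elim: l => // l IH; rewrite ltnS leq_eqVlt => /predU1P[-> | kl] lN; first exact: tg_incr.
exact: lt_trans (IH kl (ltnW lN)) (tg_incr lN).
Qed.

Lemma grid_ge0 k : (k <= N)%N -> 0 <= tg k.
Proof. by case: k => [|k] kN; rewrite -tg0 // ltW // grid_lt. Qed.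

Lemma grid_le1 k : (k <= N)%N -> tg k <= 1.
Proof. by rewrite leq_eqVlt => /predU1P[-> | kN]; rewrite -tgN // ltW // grid_lt. Qed.

Lemma chain_ref_bridge d j n (x0 xN xn : 'rV[R]_d) : (n + j < N)%N ->
  chain beta tg j n x0 xN xn = (ref_bridge 0 (tg n) (tg (n + j).+1) x0 xN xn)%:E.
Proof.
elim: j n xn => [|j IH] n xn nj /=; first by rewrite addn0.
have IHn y : chain beta tg j n.+1 x0 xN y =
    (ref_bridge 0 (tg n.+1) (tg (n + j.+1).+1) x0 xN y)%:E.
  by rewrite IH addSnnS.
under eq_fun do rewrite IHn.
apply: ref_bridge_chain.
- by rewrite lexx grid_ge0 //; lia.
- by apply: tg_incr; lia.
- by apply: grid_lt; lia.
- by apply: grid_le1; lia.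
Qed.

End Grid.

End Bridges.

Theorem proposition3 (R : realType) (d : nat) (beta : R -> R)
  (Psi Psihat : 'rV[R]_d -> R -> R)
  (beta_pos : forall t, 0 <= t <= 1 -> 0 < beta t)
  (beta_int : (@lebesgue_measure R).-integrable `[0, 1] (EFin \o beta))
  (Psi_pos : forall x t, 0 <= t <= 1 -> 0 < Psi x t)
  (Psihat_pos : forall x t, 0 <= t <= 1 -> 0 < Psihat x t)
  (* Psi solves d_t Psi = -1/2 beta Lap Psi (mild form) *)
  (Psi_eq : forall x t, 0 <= t < 1 ->
     ((Psi x t)%:E = intRd (fun y => (refK beta t 1 x y * Psi y 1)%:E))%E)
  (* Psihat solves d_t Psihat = 1/2 beta Lap Psihat (mild form) *)
  (Psihat_eq : forall y t, 0 < t <= 1 ->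
     ((Psihat y t)%:E = intRd (fun x => (Psihat x 0 * refK beta 0 t x y)%:E))%E)
  (* boundary densities *)
  (rho0 : intRd (fun x => (Psi x 0 * Psihat x 0)%:E) = 1%E)
  (rho1 : intRd (fun x => (Psi x 1 * Psihat x 1)%:E) = 1%E) :
  (forall t, 0 < t < 1 -> forall x0 x1 xt : 'rV[R]_d,
     let s2 := sig2 beta 0 t in
     let sb2 := sig2 beta t 1 in
     sb_post beta Psi Psihat t x0 x1 xt =
     gauss ((sb2 / (sb2 + s2)) *: x0 + (s2 / (sb2 + s2)) *: x1)
           (s2 * sb2 / (sb2 + s2)) xt)
  /\
  (forall (N : nat) (tg : nat -> R),
     tg 0%N = 0 -> tg N = 1 -> (forall k, (k < N)%N -> tg k < tg k.+1) ->
     forall n, (1 <= n)%N -> (n <= N.-1)%N ->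
     forall x0 xN xn : 'rV[R]_d,
       ((sb_post beta Psi Psihat (tg n) x0 xN xn)%:E =
        chain beta tg (N.-1 - n) n x0 xN xn)%E).
Proof.
split=> [t /[dup] t01 /andP[t0 t1] x0 x1 xt | N tg tg0 tgN tg_incr n n_gt0 n_le x0 xN xn].
  by rewrite sb_post_ref_bridge // ref_bridge_gauss // lexx.
have n_lt : (n < N)%N by lia.
rewrite (chain_ref_bridge beta_pos beta_int tg0 tgN tg_incr); last lia.
rewrite (_ : (n + (N.-1 - n)).+1 = N); last lia.
have tg_n : 0 < tg n < 1 by rewrite -{1}tg0 -tgN !(grid_lt tg_incr) //; lia.
by rewrite tgN sb_post_ref_bridge.
Qed.
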